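(* Let $n$ be odd and $\alpha>0$ with $\alpha\,bin(n,\tfrac12,i)\le1$ for all $i$. Let $P_e$ be the distribution on $\{0,1\}^{n+1}$ (coordinates indexed by $i\in\{0,\ldots,n\}$) in which coordinate $i$ is independently $1$ with probability $S_e(i)$ and $0$ otherwise. Then $\sum_{u\in\{0,1\}^{n+1}}\sqrt{P_e(u)}\le e^{\sqrt\alpha\,(2\pi n)^{1/4}}$. The same bound holds for the analogous distribution $P_o$ induced by $S_o$.
   Context: $bin(n,p,k)=\binom nk p^k(1-p)^{n-k}$. $S_e(i)=\alpha\,bin(n,\tfrac12,i)$ for even $i$ and $0$ for odd $i$; $S_o(i)=\alpha\,bin(n,\tfrac12,i)$ for odd $i$ and $0$ for even $i$, for $i\in\{0,\ldots,n\}$. *)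

From HB Require Import structures.
From mathcomp Require Import all_boot all_order all_algebra.
From mathcomp Require Import all_classical all_reals all_analysis.
Set Implicit Arguments. Unset Strict Implicit. Unset Printing Implicit Defensive.
Import Order.TTheory GRing.Theory Num.Theory.
Local Open Scope ring_scope.

Definition bin {R : realType} (n : nat) (p : R) (k : nat) : R :=
  ('C(n, k))%:R * p ^+ k * (1 - p) ^+ (n - k).

Definition S_e {R : realType} (alpha : R) (n i : nat) : R :=
  if ~~ odd i then alpha * bin n (1 / 2) i else 0.

Definition S_o {R : realType} (alpha : R) (n i : nat) : R :=
  if odd i then alpha * bin n (1 / 2) i else 0.

Definition prodBern {R : realType} (n : nat) (S : nat -> R)
    (u : {ffun 'I_n.+1 -> bool}) : R :=
  \prod_(i < n.+1) (if u i then S i else 1 - S i).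
Arguments prodBern {R} n S u.

From HB Require Import structures.
From mathcomp Require Import all_boot all_order all_algebra.
From mathcomp Require Import all_classical all_reals all_analysis.
From mathcomp Require Import ring lra zify.
Import Order.TTheory GRing.Theory Num.Theory.
Local Open Scope ring_scope.

(* The product structure of P_e gives
     sum_u sqrt (P_e u) = prod_i (sqrt s_i + sqrt (1 - s_i)) <= prod_i (1 + sqrt s_i)
                        <= exp (sum_i sqrt s_i) = exp (sqrt alpha * sum_(i even) sqrt b_i),
   where b_i = bin(n, 1/2, i).  For odd n the reflection i |-> n - i preserves b_i and swaps
   parities, so either parity class carries half of T = sum_i sqrt b_i.  Cauchy-Schwarz with
   weights r^-|2i-n|, r = 1 + 1/sqrt n, gives T^2 <= (sum_i b_i r^|2i-n|) (sum_i r^-|2i-n|);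
   by the binomial theorem the first factor is at most 2 ((r + 1/r)/2)^n <= 4, and the second
   is a two-sided geometric sum at most 2 sqrt n.  Hence (T/2)^4 <= 4n <= 2 pi n. *)

Lemma sqrtr_prod {R : rcfType} {I : Type} (r : seq I) (F : I -> R) :
  (forall i, 0 <= F i) ->
  Num.sqrt (\prod_(i <- r) F i) = \prod_(i <- r) Num.sqrt (F i).
Proof.
move=> F_ge0; elim: r => [|i r IHr]; first by rewrite !big_nil sqrtr1.
by rewrite !big_cons sqrtrM // IHr.
Qed.

Lemma sqrtr_add_sqrtr1B_le_expR {R : realType} (x : R) : 0 <= x <= 1 ->
  Num.sqrt x + Num.sqrt (1 - x) <= expR (Num.sqrt x).
Proof.
case/andP=> x_ge0 x_le1; apply: le_trans (expR_ge1Dx _); rewrite addrC lerD2r.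
by rewrite -[leRHS]sqrtr1 ler_wsqrtr // gerBl.
Qed.

Lemma sum_sqrt_prodBern_le {R : realType} (n : nat) (S : nat -> R) :
  (forall i, (i <= n)%N -> 0 <= S i <= 1) ->
  \sum_(u : {ffun 'I_n.+1 -> bool}) Num.sqrt (prodBern n S u)
    <= expR (\sum_(i < n.+1) Num.sqrt (S i)).
Proof.
move=> S01; set F := fun (i : 'I_n.+1) (b : bool) => if b then S i else 1 - S i.
have F_ge0 i b : 0 <= F i b.
  by have /andP[S_ge0 S_le1] := S01 i (ltn_ord i); rewrite /F; case: b; lra.
have sqrtE u : Num.sqrt (prodBern n S u) = \prod_(i < n.+1) Num.sqrt (F i (u i)).
  by rewrite sqrtr_prod // => i; exact: F_ge0.
rewrite (eq_bigr _ (fun u _ => sqrtE u)) -(bigA_distr_bigA (fun i b => Num.sqrt (F i b))).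
rewrite expR_sum.
apply: ler_prod => i _; rewrite big_bool /= addr_ge0 ?sqrtr_ge0 //=.
exact: sqrtr_add_sqrtr1B_le_expR (S01 _ (ltn_ord i)).
Qed.

Lemma sqr_sum_le_weighted {R : realFieldType} {I : Type} (r : seq I)
    (a w : I -> R) :
  (forall i, 0 < w i) ->
  (\sum_(i <- r) a i) ^+ 2 <= (\sum_(i <- r) a i ^+ 2 / w i) * \sum_(i <- r) w i.
Proof.
case: r => [|j r] w_gt0; first by rewrite !big_nil expr0n mulr0.
set S := \sum_(i <- _) a i; set A := \sum_(i <- _) _ / _; set W := \sum_(i <- _) w i.
have W_gt0 : 0 < W.
  by rewrite /W big_cons ltr_pwDl // sumr_ge0 // => i _; exact: ltW.
suff : 0 <= W * (W * A - S ^+ 2) by rewrite pmulr_rge0 // subr_ge0 mulrC.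
have -> : W * (W * A - S ^+ 2) = \sum_(i <- j :: r) (a i * W - S * w i) ^+ 2 / w i.
  have termE i : (a i * W - S * w i) ^+ 2 / w i =
      W ^+ 2 * (a i ^+ 2 / w i) - (2 * S * W) * a i + S ^+ 2 * w i.
    by field; rewrite gt_eqF.
  rewrite (eq_bigr _ (fun i _ => termE i)) !big_split /= sumrN -!mulr_sumr.
  rewrite -/S -/A -/W; ring.
by apply: sumr_ge0 => i _; rewrite divr_ge0 ?sqr_ge0 ?ltW.
Qed.

Lemma sum_parity_half {V : nmodType} (n : nat) (p : bool) (f : nat -> V) :
  odd n -> (forall i, (i <= n)%N -> f (n - i)%N = f i) ->
  (\sum_(i < n.+1 | odd i == p) f i) *+ 2 = \sum_(i < n.+1) f i.
Proof.
move=> n_odd f_sym; rewrite [RHS](bigID (fun i : 'I_n.+1 => odd i == p)) /= mulr2n.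
congr (_ + _); rewrite (reindex_inj rev_ord_inj) /=; apply: eq_big => i; rewrite subSS.
  rewrite oddB; last by rewrite -ltnS.
  by rewrite n_odd; case: (odd i); case: p.
by rewrite f_sym // -ltnS.
Qed.

Lemma exprn1D_mul_le1 {R : realDomainType} (e : R) (n : nat) :
  0 <= e -> (1 + e) ^+ n * (1 - n%:R * e) <= 1.
Proof.
move=> e_ge0; elim: n => [|n IHn]; first by rewrite expr0 mul0r subr0 mulr1.
have X_ge0 : 0 <= (1 + e) ^+ n by rewrite exprn_ge0 // addr_ge0.
have : 0 <= (1 + e) ^+ n * (n.+1%:R * e ^+ 2) by rewrite !mulr_ge0 ?sqr_ge0.
move: X_ge0 IHn; rewrite (exprSr (1 + e)) -natr1; set X := (1 + e) ^+ n.
have -> : X * (1 + e) * (1 - (n%:R + 1) * e) =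
    X * (1 - n%:R * e) - X * ((n%:R + 1) * e ^+ 2) by ring.
lra.
Qed.

Lemma expr_mean_inv_le2 {R : realFieldType} (n : nat) (t : R) :
  0 <= t -> n%:R * t ^+ 2 <= 1 -> ((1 + t + (1 + t)^-1) / 2) ^+ n <= 2.
Proof.
move=> t_ge0 nt2_le1; set e := t ^+ 2 / (2 * (1 + t)).
have e_ge0 : 0 <= e by rewrite divr_ge0 ?sqr_ge0 // mulr_ge0 // addr_ge0.
have -> : (1 + t + (1 + t)^-1) / 2 = 1 + e.
  by rewrite /e; field; rewrite gt_eqF //; lra.
have ne_le : n%:R * e <= 2^-1.
  by rewrite /e mulrA ler_pdivrMr; [lra | rewrite mulr_gt0 //; lra].
have := exprn1D_mul_le1 e n e_ge0; have : 0 <= (1 + e) ^+ n by rewrite exprn_ge0 // addr_ge0.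
nra.
Qed.

Lemma sum_geometric_le {R : realFieldType} (x : R) (m : nat) :
  0 <= x < 1 -> \sum_(i < m) x ^+ i <= (1 - x)^-1.
Proof.
case/andP=> x_ge0 x_lt1; rewrite -[leRHS]mul1r ler_pdivlMr ?subr_gt0 //.
suff -> : (\sum_(i < m) x ^+ i) * (1 - x) = 1 - x ^+ m by rewrite gerBl exprn_ge0.
by rewrite mulrC -opprB mulNr -subrX1 opprB.
Qed.

Lemma ler_expr_distn {R : realDomainType} (q r : R) (a b : nat) :
  0 <= q -> 0 <= r -> q * r = 1 ->
  r ^+ `|a - b| <= r ^+ a * q ^+ b + q ^+ a * r ^+ b.
Proof.
move=> q_ge0 r_ge0 qr1.
wlog le_ba : a b / (b <= a)%N.
  move=> hwlog; case: (leqP b a) => [|/ltnW] /hwlog //.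
  by rewrite distnC [leRHS]addrC (mulrC (q ^+ a)) (mulrC (r ^+ a)).
have -> : r ^+ a * q ^+ b = r ^+ `|a - b|.
  by rewrite distnEl // -{1}(subnK le_ba) exprD -mulrA -exprMn (mulrC r) qr1 expr1n mulr1.
by rewrite lerDl mulr_ge0 ?exprn_ge0.
Qed.

Lemma sum_expr_distn_le {R : realFieldType} (n : nat) (x : R) : odd n -> 0 <= x < 1 ->
  \sum_(i < n.+1) x ^+ `|i - (n - i)| <= 2 * x / (1 - x ^+ 2).
Proof.
move=> n_odd /andP[x_ge0 x_lt1]; set m := n./2.
have nE : n = (m + m.+1)%N.
  by move: (odd_double_half n); rewrite n_odd -addnn /=; lia.
have halfE : \sum_(i < n.+1) x ^+ `|i - (n - i)| = 2 * \sum_(i < m.+1) x ^+ (2 * i + 1).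
  rewrite -(big_mkord xpredT (fun i => x ^+ `|i - (n - i)|)).
  rewrite (big_cat_nat (n := m.+1)) //=; last by lia.
  rewrite big_nat_rev /= mulr2n mulrDl mul1r -(big_mkord xpredT (fun i => x ^+ (2 * i + 1))).
  congr (_ + _).
    by apply: eq_big_nat => i /andP[_ lt_im]; congr (_ ^+ _); rewrite distnEr; lia.
  rewrite -{1}[m.+1]add0n big_addn (_ : n.+1 - m.+1 = m.+1)%N; last by lia.
  by apply: eq_big_nat => i /andP[_ lt_im]; congr (_ ^+ _); rewrite distnEl; lia.
rewrite halfE -mulrA ler_wpM2l //.
under eq_bigr do rewrite exprD expr1 exprM.
rewrite -mulr_suml mulrC ler_wpM2l //.
by apply: sum_geometric_le; rewrite exprn_ge0 //= expr2 mulr_ilt1.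
Qed.

Lemma powR14_sqrt {R : realType} (x : R) : 0 <= x ->
  powR x (1 / 4) = Num.sqrt (Num.sqrt x).
Proof.
move=> x_ge0; rewrite (_ : 1 / 4 = 2^-1 * 2^-1); last by field.
by rewrite powRrM !powR12_sqrt ?sqrtr_ge0.
Qed.

Lemma bin_halfE {R : realType} (n i : nat) :
  (i <= n)%N -> bin n (1 / 2 : R) i = 'C(n, i)%:R / 2 ^+ n.
Proof.
move=> le_in; rewrite /bin (_ : 1 - 1 / 2 = 1 / 2 :> R); last by lra.
by rewrite -mulrA -exprD subnKC // expr_div_n expr1n mul1r.
Qed.

Lemma bin_half_ge0 {R : realType} (n i : nat) : 0 <= bin n (1 / 2 : R) i.
Proof. by rewrite /bin !mulr_ge0 ?exprn_ge0 //; lra. Qed.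

Lemma sum_bin_half_expr_distn_le {R : realType} (n : nat) (r : R) : 0 < r ->
  \sum_(i < n.+1) bin n (1 / 2) i * r ^+ `|i - (n - i)|
    <= 2 * ((r + r^-1) / 2) ^+ n.
Proof.
move=> r_gt0; set q := r^-1.
have qr1 : q * r = 1 by rewrite mulVf ?gt_eqF.
have q_ge0 : 0 <= q by rewrite invr_ge0 ltW.
have binomE : \sum_(i < n.+1) 'C(n, i)%:R * (r ^+ i * q ^+ (n - i) + q ^+ i * r ^+ (n - i))
    = 2 * (r + q) ^+ n.
  rewrite mulr2n mulrDl mul1r {1}(addrC r q) !exprDn -big_split /=.
  by apply: eq_bigr => i _; rewrite mulr_natl mulrnDl (mulrC (r ^+ i)) (mulrC (q ^+ i)).
rewrite expr_div_n mulrA -binomE mulr_suml.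
apply: ler_sum => i _; rewrite (@bin_halfE R n i (ltn_ord i)) mulrAC.
by rewrite ler_wpM2r ?invr_ge0 ?exprn_ge0 // ler_wpM2l // ler_expr_distn // ltW.
Qed.

Lemma sqr_sum_sqrt_bin_half_le {R : realType} (n : nat) (t : R) :
  odd n -> 0 < t -> n%:R * t ^+ 2 <= 1 ->
  (\sum_(i < n.+1) Num.sqrt (bin n (1 / 2) i)) ^+ 2 <= 8 / t.
Proof.
move=> n_odd t_gt0 nt2_le1; set r := 1 + t.
have r_gt1 : 1 < r by rewrite /r ltrDl.
have r_gt0 : 0 < r by lra.
set A := \sum_(i < n.+1) Num.sqrt (bin n (1 / 2) i) ^+ 2 / (r ^+ `|i - (n - i)|)^-1.
set W := \sum_(i < n.+1) (r ^+ `|i - (n - i)|)^-1.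
have A_le : A <= 4.
  rewrite /A; under eq_bigr do rewrite sqr_sqrtr ?bin_half_ge0 // invrK.
  apply: le_trans (sum_bin_half_expr_distn_le n r r_gt0) _.
  by have := expr_mean_inv_le2 n t (ltW t_gt0) nt2_le1; lra.
have W_le : W <= 2 / t.
  rewrite /W; under eq_bigr do rewrite -exprVn.
  apply: le_trans (sum_expr_distn_le n (r^-1) n_odd _) _.
    by rewrite invr_ge0 ltW //= invf_lt1.
  rewrite -subr_ge0 (_ : _ - _ = 2 / (t * (2 + t))).
    by rewrite divr_ge0 // mulr_ge0 //; lra.
  by rewrite /r; field; apply/and4P; split; rewrite ?expr2 gt_eqF //; nra.
have w_gt0 (i : 'I_n.+1) : 0 < (r ^+ `|i - (n - i)|)^-1 by rewrite invr_gt0 exprn_gt0.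
have A_ge0 : 0 <= A by apply: sumr_ge0 => i _; rewrite divr_ge0 ?sqr_ge0 ?ltW.
apply: le_trans (sqr_sum_le_weighted _ _ _ w_gt0) _.
apply: le_trans (ler_pM A_ge0 _ A_le W_le) _; last by lra.
by apply: sumr_ge0 => i _; exact: ltW.
Qed.

Lemma sum_sqrt_bin_half_parity_le {R : realType} (n : nat) (p : bool) : odd n ->
  \sum_(i < n.+1 | odd i == p) Num.sqrt (bin n (1 / 2 : R) i)
    <= powR (2 * pi * n%:R) (1 / 4).
Proof.
move=> n_odd; have n_gt0 : (0 < n)%N by case: n n_odd.
set S := \sum_(i < n.+1 | _) _.
have S_ge0 : 0 <= S by apply: sumr_ge0 => i _; exact: sqrtr_ge0.
set s := Num.sqrt (n%:R : R).
have s_gt0 : 0 < s by rewrite sqrtr_gt0 ltr0n.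
have S2_le : S ^+ 2 <= 2 * s.
  have sym i : (i <= n)%N -> Num.sqrt (bin n (1 / 2 : R) (n - i)) = Num.sqrt (bin n (1 / 2) i).
    by move=> le_in; rewrite !bin_halfE ?leq_subr // bin_sub.
  have t_gt0 : 0 < s^-1 by rewrite invr_gt0.
  have nt2_le1 : n%:R * s^-1 ^+ 2 <= 1.
    by rewrite exprVn sqr_sqrtr ?ler0n // mulfV // pnatr_eq0 -lt0n.
  have := sqr_sum_sqrt_bin_half_le n (s^-1) n_odd t_gt0 nt2_le1.
  rewrite -(sum_parity_half n p _ n_odd sym) -/S invrK mulr2n; nra.
have pin_ge0 : 0 <= 2 * pi * n%:R :> R by rewrite !mulr_ge0 ?ler0n ?pi_ge0.
rewrite powR14_sqrt //.
rewrite -[S]ger0_norm // -sqrtr_sqr ler_sqrt ?sqrtr_ge0 //; apply: le_trans S2_le _.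
rewrite -[2 * s]ger0_norm; last by rewrite mulr_ge0 // ltW.
rewrite -sqrtr_sqr ler_sqrt //.
rewrite exprMn sqr_sqrtr ?ler0n //; have := pi_ge2 R; have := ler0n R n.
nra.
Qed.

Lemma sum_sqrt_prodBern_parity_le {R : realType} (n : nat) (alpha : R) (p : bool)
    (S : nat -> R) :
  odd n -> 0 <= alpha -> (forall i, (i <= n)%N -> alpha * bin n (1 / 2) i <= 1) ->
  (forall i, S i = if odd i == p then alpha * bin n (1 / 2) i else 0) ->
  \sum_(u : {ffun 'I_n.+1 -> bool}) Num.sqrt (prodBern n S u)
    <= expR (Num.sqrt alpha * powR (2 * pi * n%:R) (1 / 4)).
Proof.
move=> n_odd alpha_ge0 alpha_bin_le1 SE.
have S01 i : (i <= n)%N -> 0 <= S i <= 1.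
  move=> le_in; rewrite SE; case: ifP => _; last by rewrite lexx ler01.
  by rewrite mulr_ge0 ?bin_half_ge0 ?alpha_bin_le1.
apply: le_trans (sum_sqrt_prodBern_le n S S01) _; rewrite ler_expR.
have -> : \sum_(i < n.+1) Num.sqrt (S i) =
    Num.sqrt alpha * \sum_(i < n.+1 | odd i == p) Num.sqrt (bin n (1 / 2) i).
  rewrite mulr_sumr [RHS]big_mkcond /=; apply: eq_bigr => i _.
  by rewrite SE; case: ifP; rewrite ?sqrtrM ?sqrtr0.
by rewrite ler_wpM2l ?sqrtr_ge0 // sum_sqrt_bin_half_parity_le.
Qed.

Theorem lemma4 (R : realType) (n : nat) (alpha : R)
  (hn : odd n) (halpha : 0 < alpha)
  (hbound : forall i : nat, (i <= n)%N -> alpha * bin n (1 / 2) i <= 1) :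
  (\sum_(u : {ffun 'I_n.+1 -> bool}) Num.sqrt (prodBern n (S_e alpha n) u)
     <= expR (Num.sqrt alpha * powR (2 * pi * n%:R) (1 / 4)))
  /\
  (\sum_(u : {ffun 'I_n.+1 -> bool}) Num.sqrt (prodBern n (S_o alpha n) u)
     <= expR (Num.sqrt alpha * powR (2 * pi * n%:R) (1 / 4))).
Proof.
split.
  apply: (sum_sqrt_prodBern_parity_le n alpha false _ hn (ltW halpha) hbound) => i.
  by rewrite /S_e; case: (odd i).
apply: (sum_sqrt_prodBern_parity_le n alpha true _ hn (ltW halpha) hbound) => i.
by rewrite /S_o; case: (odd i).
Qed.
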